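(* Let $X,Y$ be metrizable vector spaces over $K$ with metrics $d_X,d_Y$. If $Y$ is complete, then $[B_d(X,Y),d]$ is a complete metric space.
   Context: $K$ is $\mathbb{R}$ or $\mathbb{C}$. For maps $F_1,F_2:X\to Y$, $d(F_1,F_2)=\max\left\{\sup_{x\neq0,x\in X}\frac{d_Y[F_1(x),F_2(x)]}{d_X(x,0)},\ d_Y[F_1(0),F_2(0)]\right\}\in[0,\infty]$, and $B_d(X,Y)$ is the set of maps $F:X\to Y$ with $d(F,0)<\infty$; $d$ is a metric on $B_d(X,Y)$. *)

From HB Require Import structures.
From mathcomp Require Import all_boot all_order all_algebra.
From mathcomp Require Import boolp classical_sets reals constructive_ereal ereal.
From mathcomp Require complex.
Import complex.ComplexField.
Set Implicit Arguments. Unset Strict Implicit. Unset Printing Implicit Defensive.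
Import Order.TTheory GRing.Theory Num.Theory.
Local Open Scope ring_scope.
Local Open Scope classical_set_scope.

Definition scalars (R : realType) (b : bool) : numFieldType :=
  if b then (complex.complex R : numFieldType) else (R : numFieldType).

Definition absK (R : realType) (b : bool) : scalars R b -> R :=
  if b as b' return scalars R b' -> R then @Normc.normc R
  else (fun x : R => `|x|).

Definition is_metric (R : realType) (T : Type) (d : T -> T -> R) : Prop :=
  [/\ (forall x y, 0 <= d x y),
      (forall x y, d x y = 0 <-> x = y),
      (forall x y, d x y = d y x) &
      (forall x y z, d x z <= d x y + d y z)].

Definition metric_vs (R : realType) (b : bool) (X : lmodType (scalars R b))
    (d : X -> X -> R) : Prop :=
  [/\ is_metric d,
      (forall x y e, 0 < e -> exists2 del, 0 < del &
          forall x' y', d x x' < del -> d y y' < del -> d (x + y) (x' + y') < e) &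
      (forall (a : scalars R b) x e, 0 < e -> exists2 del, 0 < del &
          forall (a' : scalars R b) x', absK (a - a') < del -> d x x' < del ->
            d (a *: x) (a' *: x') < e)].

Definition cauchy_seq (R : realType) (T : Type) (d : T -> T -> R) (u : nat -> T) :=
  forall e, 0 < e -> exists N, forall m n, (N <= m)%N -> (N <= n)%N -> d (u m) (u n) < e.
Definition converges_to (R : realType) (T : Type) (d : T -> T -> R) (u : nat -> T) (l : T) :=
  forall e, 0 < e -> exists N, forall n, (N <= n)%N -> d (u n) l < e.
Definition complete_metric (R : realType) (T : Type) (d : T -> T -> R) : Prop :=
  forall u, cauchy_seq d u -> exists l, converges_to d u l.

Section MapDist.
Context (R : realType) (b : bool) (X Y : lmodType (scalars R b))
        (dX : X -> X -> R) (dY : Y -> Y -> R).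

Definition dmap (F1 F2 : X -> Y) : \bar R :=
  Order.max (ereal_sup [set ((dY (F1 x) (F2 x)) / dX x 0)%:E | x in [set x | x != 0]])
            ((dY (F1 0) (F2 0))%:E).

Definition Bd : set (X -> Y) := [set F | (dmap F (fun=> 0%R) < +oo)%E].
End MapDist.

Definition Bd_complete_metric_space (R : realType) (b : bool)
    (X Y : lmodType (scalars R b)) (dX : X -> X -> R) (dY : Y -> Y -> R) : Prop :=
  let B := Bd dX dY in
  let d := dmap dX dY in
  [/\ (forall F1 F2, B F1 -> B F2 -> (0 <= d F1 F2 < +oo)%E),
      (forall F1 F2, B F1 -> B F2 -> d F1 F2 = 0%E <-> F1 = F2),
      (forall F1 F2, B F1 -> B F2 -> d F1 F2 = d F2 F1),
      (forall F1 F2 F3, B F1 -> B F2 -> B F3 -> (d F1 F3 <= d F1 F2 + d F2 F3)%E) &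
      (forall u : nat -> X -> Y, (forall n, B (u n)) ->
         (forall e : R, 0 < e -> exists N, forall m n, (N <= m)%N -> (N <= n)%N ->
             (d (u m) (u n) < e%:E)%E) ->
         exists2 l, B l & forall e : R, 0 < e -> exists N, forall n, (N <= n)%N ->
             (d (u n) l < e%:E)%E)].

From HB Require Import structures.
From mathcomp Require Import all_boot all_order all_algebra.
From mathcomp Require Import boolp classical_sets reals constructive_ereal ereal.
From mathcomp Require Import lra.
Set Implicit Arguments. Unset Strict Implicit. Unset Printing Implicit Defensive.
Import Order.TTheory GRing.Theory Num.Theory.
Local Open Scope ring_scope.

(* d is a weighted supremum metric: d(F,G) <= c amounts to the pointwise bounds
   dY(F x, G x) <= c dX(x,0) for x <> 0 and dY(F 0, G 0) <= c, so the metric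
   axioms follow pointwise from those of dY.  A d-Cauchy sequence is pointwise
   Cauchy in Y, hence has a pointwise limit l since Y is complete; the pointwise
   bounds of the Cauchy condition pass to l, which gives convergence in d, and
   d(l,0) is then finite by the triangle inequality. *)

Section MetricFacts.
Context (R : realType) (T : eqType) (d : T -> T -> R).
Hypothesis md : is_metric d.

Lemma metric_gt0 x y : x != y -> 0 < d x y.
Proof.
case: md => d_ge0 d_eq0 _ _ neq_xy; rewrite lt_def d_ge0 andbT.
by apply: contra neq_xy => /eqP/d_eq0 ->.
Qed.

Lemma converges_to_dist_le (v : nat -> T) (l a : T) (c : R) (N : nat) :
  converges_to d v l -> (forall n, (N <= n)%N -> d a (v n) <= c) -> d a l <= c.
Proof.
move=> v_l le_c; apply/ler_addgt0Pr => e e_gt0.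
have [M HM] := v_l e e_gt0.
have [_ _ _ d_tri] := md.
apply: le_trans (d_tri a (v (maxn N M)) l) _; apply: lerD.
  by apply: le_c; rewrite leq_maxl.
by apply/ltW/HM; rewrite leq_maxr.
Qed.

End MetricFacts.

Section MapDistance.
Context (R : realType) (b : bool) (X Y : lmodType (scalars R b))
        (dX : X -> X -> R) (dY : Y -> Y -> R).
Hypotheses (mX : is_metric dX) (mY : is_metric dY).

Local Notation d := (dmap dX dY).
Local Notation B := (Bd dX dY).

Lemma dmap_ge0 (F G : X -> Y) : (0 <= d F G)%E.
Proof. by rewrite /dmap le_max lee_fin; case: mY => -> _ _ _; rewrite orbT. Qed.

Lemma dmap_leP (F G : X -> Y) (c : R) :
  (d F G <= c%:E)%E <->
  (forall x, x != 0 -> dY (F x) (G x) <= c * dX x 0) /\ dY (F 0) (G 0) <= c.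
Proof.
rewrite /dmap ge_max lee_fin; split => [/andP[le_sup le_0] | [le_x le_0]].
  split=> // x nx; rewrite -ler_pdivrMr ?metric_gt0 // -lee_fin.
  by apply: le_trans le_sup; apply: ereal_sup_ubound; exists x.
rewrite le_0 andbT; apply: ge_ereal_sup => _ [x /= nx <-].
by rewrite lee_fin ler_pdivrMr ?metric_gt0 ?le_x.
Qed.

Lemma dmap_le_pointwise (F G : X -> Y) (c : R) x : 0 <= c ->
  (d F G <= c%:E)%E -> dY (F x) (G x) <= c * (dX x 0 + 1).
Proof.
move=> c_ge0 /dmap_leP[le_x le_0].
have [dX_ge0 _ _ _] := mX.
have [->|nx] := eqVneq x 0.
  by apply: le_trans le_0 _; rewrite ler_peMr // lerDr.
by apply: le_trans (le_x _ nx) _; rewrite ler_wpM2l // lerDl.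
Qed.

Lemma dmap_sym (F G : X -> Y) : d F G = d G F.
Proof.
have [_ _ dYC _] := mY.
have dY_flip : dY = fun y y' => dY y' y by apply/funext => y; apply/funext => y'.
by rewrite [in LHS]dY_flip.
Qed.

Lemma dmap_eq0 (F G : X -> Y) : d F G = 0%E <-> F = G.
Proof.
have [dY_ge0 dY_eq0 _ _] := mY.
split => [dFG0 | <-].
  have /dmap_leP[le_x le_0] : (d F G <= 0%:E)%E by rewrite dFG0.
  apply/funext => x; apply/dY_eq0/le_anti; rewrite dY_ge0 andbT.
  have [->|nx] := eqVneq x 0; first exact: le_0.
  by rewrite -(mul0r (dX x 0)) le_x.
apply/le_anti; rewrite dmap_ge0 andbT.
by apply/dmap_leP; split => [x _|]; rewrite (dY_eq0 _ _).2 ?mul0r.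
Qed.

Lemma dmap_triangle (F G H : X -> Y) : (d F H <= d F G + d G H)%E.
Proof.
have [_ _ _ dY_tri] := mY.
case EFG: (d F G) => [r| |]; last by have := dmap_ge0 F G; rewrite EFG.
- case EGH: (d G H) => [s| |]; last by have := dmap_ge0 G H; rewrite EGH.
  + have /dmap_leP[leFG_x leFG_0] : (d F G <= r%:E)%E by rewrite EFG.
    have /dmap_leP[leGH_x leGH_0] : (d G H <= s%:E)%E by rewrite EGH.
    apply/dmap_leP; split => [x nx|].
      by rewrite mulrDl (le_trans (dY_tri _ (G x) _)) // lerD ?leFG_x ?leGH_x.
    by rewrite (le_trans (dY_tri _ (G 0) _)) // lerD.
  + by rewrite leey.
- by rewrite addye ?leey // gt_eqF // (lt_le_trans _ (dmap_ge0 G H)) ?ltNy0.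
Qed.

Lemma dmap_lty (F G : X -> Y) : B F -> B G -> (d F G < +oo)%E.
Proof.
move=> BF BG; apply: le_lt_trans (dmap_triangle F (fun=> 0) G) _.
by rewrite (dmap_sym (fun=> 0)) lte_add_pinfty.
Qed.

Lemma Bd_dmap_lty (F G : X -> Y) : B G -> (d F G < +oo)%E -> B F.
Proof.
move=> BG dFG_lty.
exact: le_lt_trans (dmap_triangle F G (fun=> 0)) (lte_add_pinfty dFG_lty BG).
Qed.

Lemma dmap_le_pointwise_limit (u : nat -> X -> Y) (l : X -> Y) n (c : R) N :
  (forall x, converges_to dY (u^~ x) (l x)) ->
  (forall m, (N <= m)%N -> (d (u n) (u m) <= c%:E)%E) -> (d (u n) l <= c%:E)%E.
Proof.
move=> u_l le_c; apply/dmap_leP; split => [x nx|].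
  by apply: (converges_to_dist_le mY (u_l x)) => m /le_c/dmap_leP[+ _]; apply.
by apply: (converges_to_dist_le mY (u_l 0)) => m /le_c/dmap_leP[].
Qed.

Section Completeness.
Hypothesis cY : complete_metric dY.
Variable u : nat -> X -> Y.
Hypothesis uB : forall n, B (u n).
Hypothesis u_cauchy : forall e : R, 0 < e -> exists N, forall m n,
  (N <= m)%N -> (N <= n)%N -> (d (u m) (u n) < e%:E)%E.

Lemma dmap_cauchy_pointwise x : cauchy_seq dY (u^~ x).
Proof.
move=> e e_gt0; have [dX_ge0 _ _ _] := mX.
have w_gt0 : 0 < dX x 0 + 1 by rewrite ltr_wpDl.
have c_gt0 : 0 < e / 2 / (dX x 0 + 1) by rewrite !divr_gt0.
have [N HN] := u_cauchy c_gt0; exists N => m n hm hn.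
apply: le_lt_trans (dmap_le_pointwise x (ltW c_gt0) (ltW (HN m n hm hn))) _.
rewrite divfK ?gt_eqF //; lra.
Qed.

Lemma dmap_cauchy_converges : exists2 l, B l &
  forall e : R, 0 < e -> exists N, forall n, (N <= n)%N -> (d (u n) l < e%:E)%E.
Proof.
have /choice[l u_l] x : exists lx, converges_to dY (u^~ x) lx.
  exact: cY (dmap_cauchy_pointwise x).
have near_l e : 0 < e -> exists N, forall n, (N <= n)%N -> (d (u n) l < e%:E)%E.
  move=> e_gt0; have /u_cauchy[N HN] : 0 < e / 2 by rewrite divr_gt0.
  exists N => n hn; apply: (@le_lt_trans _ _ (e / 2)%:E); last by rewrite lte_fin; lra.
  by apply: (dmap_le_pointwise_limit (N := N) u_l) => m hm; apply/ltW/HN.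
exists l; last exact: near_l.
have [N HN] := near_l 1 ltr01.
by apply: (Bd_dmap_lty (uB N)); rewrite dmap_sym (lt_trans (HN N _)) ?ltry.
Qed.

End Completeness.

End MapDistance.

Theorem corollary10 (R : realType) (b : bool) (X Y : lmodType (scalars R b))
    (dX : X -> X -> R) (dY : Y -> Y -> R) :
  metric_vs dX -> metric_vs dY -> complete_metric dY ->
  Bd_complete_metric_space dX dY.
Proof.
move=> [mX _ _] [mY _ _] cY; split.
- by move=> F G BF BG; rewrite dmap_ge0 ?dmap_lty.
- by move=> F G _ _; exact: dmap_eq0.
- by move=> F G _ _; exact: dmap_sym.
- by move=> F G H _ _ _; exact: dmap_triangle.
- by move=> u uB u_cauchy; exact: dmap_cauchy_converges.
Qed.
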